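(* Let $f:\mathbb{R}^n\to\mathbb{R}\cup\{\infty\}$ be a proper lower semicontinuous function and let $\bar x\in\operatorname{dom} f$. Suppose that $0\in\partial_p f(\bar x)$ and that there exists a real number $c>0$ such that $$\langle z,w\rangle\ge c\|w\|^2\quad\text{for all } w\in\operatorname{dom} D(\partial f)(\bar x|0)\text{ and all } z\in D(\partial f)(\bar x|0)(w).$$ Then $\bar x$ is a strong local minimizer of $f$ with modulus $\kappa$ for every $\kappa\in(0,c)$. Moreover, $$\mathrm{QG}(f;\bar x)\ge \inf\Big\{\frac{\langle z,w\rangle}{\|w\|^2}\ \Big|\ z\in D(\partial f)(\bar x|0)(w),\ w\in\operatorname{dom} D(\partial f)(\bar x|0)\Big\},$$ with the convention $0/0=\infty$.
   Context: For $\Omega\subset\mathbb{R}^N$ and $\bar u\in\Omega$, the tangent (contingent) cone is $T_\Omega(\bar u)=\{v\mid \exists t_k\downarrow0,\ v_k\to v \text{ with } \bar u+t_kv_k\in\Omega\}$. The regular normal cone is $\widehat N_\Omega(\bar u)=T_\Omega(\bar u)^\circ$ (polar cone), and the limiting normal cone $N_\Omega(\bar u)$ is the set of limits of $v_k\in\widehat N_\Omega(u_k)$ with $u_k\to\bar u$, $u_k\in\Omega$. For a proper lsc $f$ and $\bar x\in\operatorname{dom} f$, the limiting subdifferential is $\partial f(\bar x)=\{v\mid (v,-1)\in N_{\operatorname{epi} f}(\bar x,f(\bar x))\}$, and the proximal subdifferential is $\partial_p f(\bar x)=\{v\mid \liminf_{x\to\bar x}\frac{f(x)-f(\bar x)-\langle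 v,x-\bar x\rangle}{\|x-\bar x\|^2}>-\infty\}$. For a set-valued map $F:\mathbb{R}^n\rightrightarrows\mathbb{R}^m$ and $(\bar x,\bar y)\in\operatorname{gph}F$, the graphical derivative is $DF(\bar x|\bar y)(w)=\{z\mid (w,z)\in T_{\operatorname{gph}F}(\bar x,\bar y)\}$; the subgradient graphical derivative is $D(\partial f)(\bar x|\bar v)$, and $\operatorname{dom} D(\partial f)(\bar x|0)=\{w\mid D(\partial f)(\bar x|0)(w)\ne\emptyset\}$. A point $\bar x\in\operatorname{dom} f$ is a strong local minimizer of $f$ with modulus $\kappa>0$ if there is $\gamma>0$ with $f(x)-f(\bar x)\ge\frac{\kappa}{2}\|x-\bar x\|^2$ for all $x$ with $\|x-\bar x\|\le\gamma$ (the quadratic growth condition). $\mathrm{QG}(f;\bar x)$ denotes the supremum of all $\kappa>0$ such that $\bar x$ is a strong local minimizer of $f$ with modulus $\kappa$. *)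

From Stdlib Require Import Reals.
From mathcomp Require Import ssreflect ssrfun ssrbool eqtype ssrnat seq fintype bigop.
Set Implicit Arguments.
Unset Strict Implicit.
Local Open Scope R_scope.

Definition vec (n : nat) := 'I_n -> R.
Definition vzero (n : nat) : vec n := fun _ => 0.
Definition vadd n (u v : vec n) : vec n := fun i => u i + v i.
Definition vsub n (u v : vec n) : vec n := fun i => u i - v i.
Definition vscale n (a : R) (u : vec n) : vec n := fun i => a * u i.
Definition inner n (u v : vec n) : R := \big[Rplus/0]_(i < n) (u i * v i).
Definition vnorm n (u : vec n) : R := sqrt (inner u u).

Definition vcat n m (u : vec n) (v : vec m) : vec (n + m) :=
  fun i => match split i with inl j => u j | inr k => v k end.
Definition vfst n m (p : vec (n + m)) : vec n := fun j => p (lshift m j).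
Definition vsnd n m (p : vec (n + m)) : vec m := fun k => p (rshift n k).
Definition sca (a : R) : vec 1 := fun _ => a.

Definition vcv n (u : nat -> vec n) (l : vec n) : Prop :=
  forall eps, 0 < eps -> exists N : nat, forall k : nat, (N <= k)%coq_nat ->
    vnorm (vsub (u k) l) < eps.

Definition tangent_cone n (Om : vec n -> Prop) (ub : vec n) (v : vec n) : Prop :=
  exists (t : nat -> R) (vk : nat -> vec n),
    (forall k, 0 < t k) /\ Un_decreasing t /\ Un_cv t 0 /\ vcv vk v /\
    (forall k, Om (vadd ub (vscale (t k) (vk k)))).
Definition reg_normal_cone n (Om : vec n -> Prop) (ub : vec n) (y : vec n) : Prop :=
  forall v, tangent_cone Om ub v -> inner y v <= 0.
Definition lim_normal_cone n (Om : vec n -> Prop) (ub : vec n) (y : vec n) : Prop :=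
  exists (uk : nat -> vec n) (yk : nat -> vec n),
    (forall k, Om (uk k)) /\ vcv uk ub /\ vcv yk y /\
    (forall k, reg_normal_cone Om (uk k) (yk k)).

Inductive ereal : Type := EFin (r : R) | EPInf | EMInf.
Definition ele (a b : ereal) : Prop :=
  match a, b with
  | EMInf, _ => True
  | _, EPInf => True
  | EFin x, EFin y => x <= y
  | _, _ => False
  end.
Definition elt (a b : ereal) : Prop := ele a b /\ a <> b.
Definition eaddr (e : ereal) (r : R) : ereal :=
  match e with EFin a => EFin (a + r) | _ => e end.

Definition is_sup (S : ereal -> Prop) (s : ereal) : Prop :=
  (forall e, S e -> ele e s) /\ (forall s', (forall e, S e -> ele e s') -> ele s s').
Definition is_inf (S : ereal -> Prop) (s : ereal) : Prop :=
  (forall e, S e -> ele s e) /\ (forall s', (forall e, S e -> ele s' e) -> ele s' s).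

Definition in_dom n (f : vec n -> ereal) (x : vec n) : Prop := exists r, f x = EFin r.
Definition proper n (f : vec n -> ereal) : Prop :=
  (forall x, f x <> EMInf) /\ (exists x, f x <> EPInf).
Definition lsc n (f : vec n -> ereal) : Prop :=
  forall (x : vec n) (r : R), elt (EFin r) (f x) ->
    exists delta, 0 < delta /\
      forall y, vnorm (vsub y x) < delta -> elt (EFin r) (f y).

Definition epi n (f : vec n -> ereal) (p : vec (n + 1)) : Prop :=
  ele (f (vfst p)) (EFin (vsnd p ord0)).

Definition subdiff n (f : vec n -> ereal) (x v : vec n) : Prop :=
  exists r, f x = EFin r /\
    lim_normal_cone (epi f) (vcat x (sca r)) (vcat v (sca (-1))).

(* proximal subdifferential:
   liminf_{x -> xb} (f x - f xb - <v, x - xb>) / |x - xb|^2 > -oo,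
   i.e. the quotient is bounded below by some M on a punctured neighbourhood. *)
Definition prox_subdiff n (f : vec n -> ereal) (xb v : vec n) : Prop :=
  in_dom f xb /\
  exists (M delta : R), 0 < delta /\
    forall x, 0 < vnorm (vsub x xb) < delta ->
      ele (eaddr (f xb) (inner v (vsub x xb) + M * (vnorm (vsub x xb))^2)) (f x).

Definition gph_subdiff n (f : vec n -> ereal) (p : vec (n + n)) : Prop :=
  subdiff f (vfst p) (vsnd p).

Definition gderiv_subdiff n (f : vec n -> ereal) (xb vb w z : vec n) : Prop :=
  tangent_cone (gph_subdiff f) (vcat xb vb) (vcat w z).
Definition dom_gderiv_subdiff n (f : vec n -> ereal) (xb vb w : vec n) : Prop :=
  exists z, gderiv_subdiff f xb vb w z.

Definition strong_local_min n (f : vec n -> ereal) (xb : vec n) (kappa : R) : Prop :=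
  0 < kappa /\ in_dom f xb /\
  exists gamma, 0 < gamma /\
    forall x, vnorm (vsub x xb) <= gamma ->
      ele (eaddr (f xb) (kappa / 2 * (vnorm (vsub x xb))^2)) (f x).

(* QG(f; xb) is the supremum of this set *)
Definition QG_set n (f : vec n -> ereal) (xb : vec n) (e : ereal) : Prop :=
  exists kappa, e = EFin kappa /\ 0 < kappa /\ strong_local_min f xb kappa.

(* <z,w>/|w|^2 with the convention 0/0 = +oo (w = 0 forces <z,w> = 0) *)
Definition quot n (z w : vec n) : ereal :=
  match Req_dec_T (vnorm w) 0 with
  | left _ => EPInf
  | right _ => EFin (inner z w / (vnorm w)^2)
  end.
Definition curv_set n (f : vec n -> ereal) (xb : vec n) (e : ereal) : Prop :=
  exists w z, dom_gderiv_subdiff f xb (@vzero n) w /\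
    gderiv_subdiff f xb (@vzero n) w z /\ e = quot z w.

From Pilot Require Import Defs.
From Stdlib Require Import Reals Lra Lia Rtopology.
From Stdlib Require Import FunctionalExtensionality IndefiniteDescription Classical.
From HB Require Import structures.
From mathcomp Require Import ssreflect ssrfun ssrbool eqtype ssrnat seq fintype bigop.
From mathcomp Require Import zify.
Set Implicit Arguments.
Unset Strict Implicit.
Local Open Scope R_scope.

(* If quadratic growth with modulus
   kappa < c fails, pick k1 in (kappa, c) and a point x close to xb violating
   it.  Minimizing f plus the penalty
     -(k1/2)|y - xb|^2 + A max(0, |y - xb|^2 - a)^2,   a = |x - xb|^2,
   over the ball |y - xb|^2 <= 2a (Weierstrass) gives an interior minimizer
   u != xb -- here the quadratic minorant coming from 0 in the proximal
   subdifferential is used -- and the Fermat rule yields a radial subgradient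
   lambda (u - xb) in df(u) with lambda <= k1.  Doing this for x -> xb and
   rescaling by t = |u - xb| produces, after extracting convergent
   subsequences, a unit w with lambda w in D(df)(xb|0)(w), so that
   c <= <lambda w, w> = lambda <= k1 < c.  Part 2 follows by applying part 1
   with every lower bound c' of the curvature quotients. *)

Lemma Rplus_associative : associative Rplus. Proof. by move=> *; rewrite Rplus_assoc. Qed.
HB.instance Definition _ :=
  Monoid.isComLaw.Build R 0 Rplus Rplus_associative Rplus_comm Rplus_0_l.

Lemma cv_const (a : R) : Un_cv (fun _ => a) a.
Proof. move=> eps He; exists 0%nat => k _; rewrite /R_dist Rminus_diag_eq // Rabs_R0; lra. Qed.

Lemma Un_cv_ext (u v : nat -> R) l : (forall k, u k = v k) -> Un_cv u l -> Un_cv v l.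
Proof. move=> E H eps He; case: (H eps He) => N HN; exists N => k Hk; rewrite -E; auto. Qed.

Section Sums.
Variable n : nat.
Implicit Types F : 'I_n -> R.

Lemma sum_scal a F : a * \big[Rplus/0]_(i < n) F i = \big[Rplus/0]_(i < n) (a * F i).
Proof.
elim/big_rec2: _ => [|i y1 y2 _ <-]; first by rewrite Rmult_0_r.
by rewrite Rmult_plus_distr_l.
Qed.

Lemma sum_ge0 F : (forall i, 0 <= F i) -> 0 <= \big[Rplus/0]_(i < n) F i.
Proof.
move=> H; elim/big_rec: _ => [|i y _ Hy]; first lra.
exact: Rplus_le_le_0_compat.
Qed.

Lemma sum_term_le F j : (forall i, 0 <= F i) -> F j <= \big[Rplus/0]_(i < n) F i.
Proof.
move=> H; rewrite (bigD1 j) //=.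
rewrite -{1}[F j]Rplus_0_r; apply: Rplus_le_compat_l.
elim/big_rec: _ => [|i y _ Hy]; first lra.
exact: Rplus_le_le_0_compat.
Qed.

Lemma sum_cv (F : nat -> 'I_n -> R) (l : 'I_n -> R) :
  (forall i, Un_cv (fun k => F k i) (l i)) ->
  Un_cv (fun k => \big[Rplus/0]_(i < n) F k i) (\big[Rplus/0]_(i < n) l i).
Proof.
move=> H.
suff G : forall r : seq 'I_n,
    Un_cv (fun k => \big[Rplus/0]_(i <- r) F k i) (\big[Rplus/0]_(i <- r) l i) by exact: G.
elim => [|i r IH].
  apply: (@Un_cv_ext (fun _ => 0)) => [k|]; first by rewrite big_nil.
  rewrite big_nil; exact: cv_const.
apply: (@Un_cv_ext (fun k => F k i + \big[Rplus/0]_(j <- r) F k j)) => [k|].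
  by rewrite big_cons.
rewrite big_cons; exact: CV_plus.
Qed.
End Sums.

Definition sqnorm n (u : vec n) : R := inner u u.

Section Euclid.
Variable n : nat.
Implicit Types u v w : vec n.

Lemma inner_sym u v : inner u v = inner v u.
Proof. by apply: eq_bigr => i _; rewrite Rmult_comm. Qed.

Lemma inner_add_l u v w : inner (vadd u v) w = inner u w + inner v w.
Proof. rewrite /inner -big_split; apply: eq_bigr => i _ /=; rewrite /vadd; ring. Qed.

Lemma inner_scale_l t u v : inner (vscale t u) v = t * inner u v.
Proof. rewrite /inner sum_scal; apply: eq_bigr => i _; rewrite /vscale; ring. Qed.

Lemma inner_add_r u v w : inner u (vadd v w) = inner u v + inner u w.
Proof. by rewrite inner_sym inner_add_l inner_sym (inner_sym w). Qed.

Lemma inner_scale_r t u v : inner u (vscale t v) = t * inner u v.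
Proof. by rewrite inner_sym inner_scale_l inner_sym. Qed.

Lemma inner_zero_l v : inner (@vzero n) v = 0.
Proof. rewrite /inner; apply: big1 => i _; rewrite /vzero; ring. Qed.

Lemma sqnorm_ge0 u : 0 <= sqnorm u.
Proof. apply: sum_ge0 => i; exact: Rle_0_sqr. Qed.

Lemma vnorm_sq u : vnorm u ^ 2 = sqnorm u.
Proof. by rewrite /vnorm pow2_sqrt //; apply: sqnorm_ge0. Qed.

Lemma vnorm_ge0 u : 0 <= vnorm u.
Proof. exact: sqrt_pos. Qed.

Lemma coord_sq_le u i : u i * u i <= sqnorm u.
Proof. apply: (@sum_term_le n (fun i => u i * u i) i) => j; exact: Rle_0_sqr. Qed.

Lemma coord_le_norm u i : Rabs (u i) <= vnorm u.
Proof. rewrite -sqrt_Rsqr_abs /vnorm; apply: sqrt_le_1_alt; exact: coord_sq_le. Qed.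

Lemma sqnorm_eq0 u : sqnorm u = 0 -> u = @vzero n.
Proof.
move=> H; apply: functional_extensionality => i.
have := coord_sq_le u i; rewrite H /vzero => Hi.
have := Rle_0_sqr (u i); rewrite /Rsqr => H2; nra.
Qed.

Lemma sqnorm_sub_eq0 u v : sqnorm (vsub u v) = 0 -> u = v.
Proof.
move=> /sqnorm_eq0 E; apply: functional_extensionality => i.
by have := f_equal (fun w => w i) E; rewrite /vsub /vzero => ?; lra.
Qed.

Lemma sqnorm_scale a u : sqnorm (vscale a u) = a * a * sqnorm u.
Proof. rewrite /sqnorm inner_scale_l inner_scale_r; ring. Qed.

Lemma sqnorm_add u v : sqnorm (vadd u v) = sqnorm u + 2 * inner u v + sqnorm v.
Proof. rewrite /sqnorm !inner_add_l !inner_add_r (inner_sym v u); ring. Qed.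

Lemma cauchy_schwarz u v : inner u v * inner u v <= sqnorm u * sqnorm v.
Proof.
have [Hv|Hv] := Rle_lt_or_eq_dec _ _ (sqnorm_ge0 v); last first.
  rewrite -Hv (sqnorm_eq0 (esym Hv)) inner_sym inner_zero_l; lra.
(* the quadratic t |-> |u + t v|^2 is nonnegative, in particular at its minimum *)
set t := - inner u v / sqnorm v.
have := sqnorm_ge0 (vadd u (vscale t v)).
rewrite sqnorm_add inner_scale_r sqnorm_scale /t => H.
have Hq : 0 <= sqnorm u * sqnorm v - inner u v * inner u v.
  have -> : sqnorm u * sqnorm v - inner u v * inner u v =
    sqnorm v * (sqnorm u + 2 * (- inner u v / sqnorm v * inner u v) +
      - inner u v / sqnorm v * (- inner u v / sqnorm v) * sqnorm v) by field; lra.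
  exact: Rmult_le_pos (Rlt_le _ _ Hv) H.
lra.
Qed.
End Euclid.

Lemma vcat_l n m (a : vec n) (b : vec m) j : vcat a b (lshift m j) = a j.
Proof. by rewrite /vcat -[lshift m j]/(unsplit (inl j)) unsplitK. Qed.

Lemma vcat_r n m (a : vec n) (b : vec m) k : vcat a b (rshift n k) = b k.
Proof. by rewrite /vcat -[rshift n k]/(unsplit (inr k)) unsplitK. Qed.

Lemma vfst_vcat n m (a : vec n) (b : vec m) : vfst (vcat a b) = a.
Proof. apply: functional_extensionality => j; exact: vcat_l. Qed.

Lemma vsnd_vcat n m (a : vec n) (b : vec m) : vsnd (vcat a b) = b.
Proof. apply: functional_extensionality => j; exact: vcat_r. Qed.

Lemma inner_split n m (p q : vec (n + m)) :
  inner p q = inner (vfst p) (vfst q) + inner (vsnd p) (vsnd q).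
Proof. by rewrite /inner big_split_ord. Qed.

Lemma inner_1 (p q : vec 1) : inner p q = p ord0 * q ord0.
Proof. by rewrite /inner big_ord1. Qed.

Section Convergence.
Variable n : nat.

Lemma vcv_coord (u : nat -> vec n) l : vcv u l -> forall i, Un_cv (fun k => u k i) (l i).
Proof.
move=> H i eps He; case: (H eps He) => N HN; exists N => k Hk.
have := coord_le_norm (vsub (u k) l) i; have := HN k Hk; rewrite /R_dist /vsub; lra.
Qed.

Lemma coord_vcv (u : nat -> vec n) l : (forall i, Un_cv (fun k => u k i) (l i)) -> vcv u l.
Proof.
move=> H.
have Hs : Un_cv (fun k => sqnorm (vsub (u k) l)) 0.
  have := @sum_cv n (fun k i => vsub (u k) l i * vsub (u k) l i) (fun _ => 0).
  rewrite big1 //; apply => i.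
  have -> : 0 = (l i - l i) * (l i - l i) by ring.
  apply: CV_mult; apply: CV_minus => //; exact: cv_const.
move=> eps He; case: (Hs (eps * eps) ltac:(nra)) => N HN; exists N => k Hk.
have := HN k Hk; rewrite /R_dist Rminus_0_r Rabs_right; last exact: Rle_ge (sqnorm_ge0 _).
move=> h; rewrite /vnorm -(sqrt_Rsqr eps); last lra.
apply: sqrt_lt_1_alt; split; [exact: sqnorm_ge0 | exact: h].
Qed.

Lemma vcv_const (v : vec n) : vcv (fun _ => v) v.
Proof. by apply: coord_vcv => i; apply: cv_const. Qed.

Lemma vcv_sub (u : nat -> vec n) l a : vcv u l -> vcv (fun k => vsub (u k) a) (vsub l a).
Proof.
move=> /vcv_coord H; apply: coord_vcv => i.
apply: CV_minus; [exact: H | exact: cv_const].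
Qed.

Lemma inner_cv (g : vec n) (u : nat -> vec n) l :
  vcv u l -> Un_cv (fun k => inner g (u k)) (inner g l).
Proof.
move=> /vcv_coord H; apply: (@sum_cv n (fun k i => g i * u k i)) => i.
apply: CV_mult => //; exact: cv_const.
Qed.

Lemma sqnorm_cv (u : nat -> vec n) l : vcv u l -> Un_cv (fun k => sqnorm (u k)) (sqnorm l).
Proof. move=> /vcv_coord H; apply: (@sum_cv n (fun k i => u k i * u k i)) => i; exact: CV_mult. Qed.
End Convergence.

Lemma vcv_fst n m (u : nat -> vec (n + m)) l : vcv u l -> vcv (fun k => vfst (u k)) (vfst l).
Proof. by move=> /vcv_coord H; apply: coord_vcv => j; apply: H. Qed.

Lemma vcv_snd n m (u : nat -> vec (n + m)) l : vcv u l -> vcv (fun k => vsnd (u k)) (vsnd l).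
Proof. by move=> /vcv_coord H; apply: coord_vcv => j; apply: H. Qed.

Lemma cv_le_eventually (a b : nat -> R) la lb : Un_cv a la -> Un_cv b lb ->
  (exists N, forall k, (N <= k)%coq_nat -> a k <= b k) -> la <= lb.
Proof.
move=> Ha Hb [N HN]; apply: Rnot_lt_le => Hlt.
have He : 0 < (la - lb) / 2 by lra.
case: (Ha _ He) => N1 H1; case: (Hb _ He) => N2 H2.
set k := (N + N1 + N2)%coq_nat.
have := H1 k ltac:(rewrite /k; lia); have := H2 k ltac:(rewrite /k; lia).
have := HN k ltac:(rewrite /k; lia); rewrite /R_dist => h0 h1 h2.
split_Rabs; lra.
Qed.

Lemma inv_succ_pos k : 0 < / INR (S k).
Proof. by apply: Rinv_0_lt_compat; apply: lt_0_INR; lia. Qed.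

Lemma inv_succ_small (e : R) : 0 < e -> exists N, forall k, (N <= k)%coq_nat -> / INR (S k) < e.
Proof.
move=> He; have [N [HN1 HN2]] := archimed_cor1 e He; exists N => k Hk.
apply: Rle_lt_trans HN1; apply: Rinv_le_contravar; first by apply: lt_0_INR; lia.
apply: le_INR; lia.
Qed.

Definition incr (phi : nat -> nat) := forall k, (phi k < phi (S k))%coq_nat.

Lemma incr_ge phi : incr phi -> forall k, (k <= phi k)%coq_nat.
Proof. move=> H; elim => [|k IH]; first lia. have := H k; lia. Qed.

Lemma incr_mono phi : incr phi -> forall m k, (m <= k)%coq_nat -> (phi m <= phi k)%coq_nat.
Proof.
move=> H m k Hmk; elim: k Hmk => [|k IH] Hmk; first by have -> : m = 0%nat by lia.
case: (Nat.eq_dec m (S k)) => [->|Hne]; first lia.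
have := IH ltac:(lia); have := H k; lia.
Qed.

Lemma incr_comp phi psi : incr phi -> incr psi -> incr (fun k => phi (psi k)).
Proof.
move=> H1 H2 k; have := H1 (psi k).
have := @incr_mono phi H1 (S (psi k)) (psi (S k)) ltac:(have := H2 k; lia); lia.
Qed.

Lemma cv_subseq u l phi : Un_cv u l -> incr phi -> Un_cv (fun k => u (phi k)) l.
Proof.
move=> H Hp eps He; case: (H eps He) => N HN; exists N => k Hk; apply: HN.
have := @incr_ge phi Hp k; rewrite /ge in Hk *; lia.
Qed.

Lemma decreasing_subseq (t : nat -> R) phi :
  Un_decreasing t -> incr phi -> Un_decreasing (fun k => t (phi k)).
Proof. by move=> Hdec Hphi k; apply: decreasing_prop => //; have := Hphi k; lia. Qed.

(* Bolzano-Weierstrass for real sequences, in subsequence form: the Stdlib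
   version only provides an adherence value, from which a subsequence is
   extracted by choosing indices [seqsel] one after another. *)
Definition seqsel (sel : nat -> nat -> nat) : nat -> nat :=
  fix g k := match k with 0%nat => sel 0%nat 0%nat | S k' => sel (S (g k')) (S k') end.

Lemma bolzano_weierstrass_seq (u : nat -> R) B : (forall k, Rabs (u k) <= B) ->
  exists phi l, incr phi /\ Un_cv (fun k => u (phi k)) l.
Proof.
move=> HB.
have [l Hl] := @Bolzano_Weierstrass u _ (compact_P3 (-B) B)
  (fun k => ltac:(have := HB k; split_Rabs; lra)).
have near : forall N k : nat, exists p : nat, (N <= p)%coq_nat /\ Rabs (u p - l) < / INR (S k).
  move=> N k.
  have [p [Hp1 Hp2]] := Hl (disc l (mkposreal _ (inv_succ_pos k))) N
    ltac:(exists (mkposreal _ (inv_succ_pos k)) => y; done).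
  by exists p.
pose sel N k := proj1_sig (constructive_indefinite_description _ (near N k)).
have Hsel : forall N k, (N <= sel N k)%coq_nat /\ Rabs (u (sel N k) - l) < / INR (S k).
  move=> N k; exact: (proj2_sig (constructive_indefinite_description _ (near N k))).
exists (seqsel sel), l; split.
  move=> k /=; have := (Hsel (S (seqsel sel k)) (S k)).1; lia.
have Hd : forall k, Rabs (u (seqsel sel k) - l) < / INR (S k) by case => [|k] /=; apply Hsel.
move=> eps He; have [N HN] := inv_succ_small He; exists N => k Hk.
exact: Rlt_trans (Hd k) (HN k Hk).
Qed.

Lemma bolzano_weierstrass_fin (T : finType) (F : T -> nat -> R) B :
  (forall i k, Rabs (F i k) <= B) ->
  exists phi (l : T -> R), incr phi /\ forall i, Un_cv (fun k => F i (phi k)) (l i).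
Proof.
move=> HB.
have family : forall r : seq T, exists phi, incr phi /\
    forall i, i \in r -> exists l, Un_cv (fun k => F i (phi k)) l.
  elim => [|j r [phi [Hphi IH]]]; first by exists id; split => // k /=; lia.
  have [psi [l [Hpsi Hl]]] := @bolzano_weierstrass_seq (fun k => F j (phi k)) B (fun k => HB j (phi k)).
  exists (fun k => phi (psi k)); split; first exact: incr_comp.
  move=> i; rewrite in_cons => /orP [/eqP ->|Hi]; first by exists l.
  have [l' Hl'] := IH i Hi; exists l'; exact: (@cv_subseq (fun k => F i (phi k))).
have [phi [Hphi H]] := family (index_enum T).
pose l i := proj1_sig (constructive_indefinite_description _ (H i (mem_index_enum i))).
exists phi, l; split => // i.
exact: (proj2_sig (constructive_indefinite_description _ (H i (mem_index_enum i)))).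
Qed.

Lemma bolzano_weierstrass_vec n (u : nat -> vec n) B : (forall k, vnorm (u k) <= B) ->
  exists phi l, incr phi /\ vcv (fun k => u (phi k)) l.
Proof.
move=> HB.
have [phi [l [Hphi Hl]]] := @bolzano_weierstrass_fin _ (fun i k => u k i) B
  (fun i k => Rle_trans _ _ _ (coord_le_norm (u k) i) (HB k)).
by exists phi, l; split => //; apply: coord_vcv.
Qed.

Lemma ele_trans a b c : ele a b -> ele b c -> ele a c.
Proof. case: a => [x| |]; case: b => [y| |]; case: c => [z| |] //=; lra. Qed.

Lemma not_ele_gap (e : ereal) (b : R) : e <> EMInf -> ~ ele e (EFin b) ->
  exists r, b < r /\ elt (EFin r) e.
Proof.
case: e => [a| |] //= _ Hn.
- exists ((a + b) / 2); split; first lra.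
  by split; [simpl; lra | case; lra].
- by exists (b + 1); split; [lra | split].
Qed.

Lemma lsc_seq n (f : vec n -> ereal) (y : nat -> vec n) u (b : nat -> R) lb :
  (forall x, f x <> EMInf) -> lsc f -> vcv y u -> Un_cv b lb ->
  (forall k, ele (f (y k)) (EFin (b k))) -> ele (f u) (EFin lb).
Proof.
move=> Hfin Hlsc Hy Hb Hle; apply: NNPP => Hn.
have [r [Hr Hru]] := not_ele_gap (Hfin u) Hn.
have [d [Hd Hnear]] := Hlsc u r Hru.
have [N1 HN1] := Hy d Hd.
have [N2 HN2] := Hb (r - lb) ltac:(lra).
set k := (N1 + N2)%coq_nat.
have [Hrk _] := Hnear (y k) (HN1 k ltac:(rewrite /k; lia)).
have := ele_trans Hrk (Hle k) => /= Hrb.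
have := HN2 k ltac:(rewrite /k; lia); rewrite /R_dist => Habs.
have [? _] := Rabs_def2 _ _ Habs; lra.
Qed.

Lemma inv_succ_cv0 : Un_cv (fun k => / INR (S k)) 0.
Proof.
move=> eps He; have [N HN] := inv_succ_small He; exists N => k Hk.
rewrite /R_dist Rminus_0_r Rabs_right; first exact: HN.
exact: Rle_ge (Rlt_le _ _ (inv_succ_pos k)).
Qed.

Lemma inf_approx (E : R -> Prop) (B : R) : (forall v, E v -> B <= v) -> (exists v, E v) ->
  exists m, (forall v, E v -> m <= v) /\ forall k : nat, exists v, E v /\ v < m + / INR (S k).
Proof.
move=> HB [v0 Hv0].
have Hub : is_upper_bound (fun v => E (- v)) (- B).
  by move=> v /HB ?; lra.
have Hne : exists v, E (- v) by exists (- v0); rewrite Ropp_involutive.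
have [M [HM1 HM2]] := completeness _ (ex_intro _ _ Hub) Hne.
exists (- M); split.
  by move=> v Hv; have := HM1 (- v); rewrite Ropp_involutive => /(_ Hv) ?; lra.
move=> k; have Hk := inv_succ_pos k; apply: NNPP => Hno.
have : M <= M - / INR (S k); last lra.
apply: HM2 => v Hv; apply: Rnot_lt_le => Hlt; apply: Hno; exists (- v); split => //; lra.
Qed.

Lemma vcv_shift n (u : nat -> vec n) a l :
  vcv (fun k => vsub (u k) a) l -> vcv u (vadd a l).
Proof.
move=> H eps He; have [N HN] := H eps He; exists N => k Hk.
have -> : vsub (u k) (vadd a l) = vsub (vsub (u k) a) l.
  by apply: functional_extensionality => i; rewrite /vsub /vadd; ring.
exact: HN.
Qed.

Lemma weierstrass_min n (f : vec n -> ereal) (h : vec n -> R) (xb : vec n) (R0 B : R) :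
  (forall x, f x <> EMInf) -> lsc f ->
  (forall (y : nat -> vec n) u, vcv y u -> Un_cv (fun k => h (y k)) (h u)) ->
  (forall y fy, sqnorm (vsub y xb) <= R0 -> f y = EFin fy -> B <= fy + h y) ->
  (exists y fy, sqnorm (vsub y xb) <= R0 /\ f y = EFin fy) ->
  exists u fu, sqnorm (vsub u xb) <= R0 /\ f u = EFin fu /\
    forall y fy, sqnorm (vsub y xb) <= R0 -> f y = EFin fy -> fu + h u <= fy + h y.
Proof.
move=> Hfin Hlsc Hh HB [y0 [fy0 [Hy0 Hfy0]]].
pose E v := exists y fy, sqnorm (vsub y xb) <= R0 /\ f y = EFin fy /\ v = fy + h y.
have [m [Hlow Happrox]] : exists m, (forall v, E v -> m <= v) /\
    forall k : nat, exists v, E v /\ v < m + / INR (S k).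
  apply: (inf_approx (B := B)); last by exists (fy0 + h y0), y0, fy0.
  by move=> v [y [fy [H1 [H2 ->]]]]; apply: HB.
have Hpick : forall k : nat, exists yk, sqnorm (vsub yk xb) <= R0 /\
    exists fy, f yk = EFin fy /\ fy + h yk < m + / INR (S k).
  move=> k; have [_ [[yk [fy [H1 [H2 ->]]]] Hlt]] := Happrox k.
  by exists yk; split => //; exists fy.
have [y Hy] := functional_choice _ Hpick.
have HR0 : 0 <= R0 by have := sqnorm_ge0 (vsub y0 xb); lra.
have Hbnd : forall k, vnorm (vsub (y k) xb) <= sqrt R0.
  by move=> k; apply: sqrt_le_1_alt; exact: (Hy k).1.
have [phi [l [Hphi Hl]]] := bolzano_weierstrass_vec Hbnd.
have Hu := vcv_shift Hl; set u := vadd xb l in Hu.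
have Hsu : sqnorm (vsub u xb) <= R0.
  apply: (Rle_cv_lim _ (sqnorm_cv (vcv_sub xb Hu)) (cv_const R0)).
  by move=> k; exact: (Hy (phi k)).1.
have Hfu : ele (f u) (EFin (m - h u)).
  apply: (lsc_seq (b := fun k => m + / INR (S (phi k)) - h (y (phi k))) Hfin Hlsc Hu).
  - have -> : m - h u = m + 0 - h u by ring.
    apply: CV_minus (Hh _ _ Hu).
    apply: CV_plus (cv_const m) (cv_subseq inv_succ_cv0 Hphi).
  - move=> k; have [_ [fy [-> Hfy]]] := Hy (phi k); rewrite /ele; lra.
move: Hfu (Hfin u); case Efu: (f u) => [fu| |] //= Hle _.
exists u, fu; split => //; split => // y' fy H1 H2.
have := Hlow (fy + h y') ltac:(by exists y', fy); move=> ?; lra.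
Qed.

Lemma sqnorm_add_small n (e : vec n) eta : 0 < eta ->
  exists r, 0 < r /\ forall d, sqnorm d < r -> sqnorm (vadd e d) < sqnorm e + eta.
Proof.
move=> Heta; set s := sqnorm e.
have Hs : 0 <= s := sqnorm_ge0 e.
exists (Rmin (eta / 4) (eta * eta / (16 * (s + 1)))); split.
  by apply: Rmin_glb_lt; [lra | apply: Rdiv_lt_0_compat; nra].
move=> d Hd.
have Hd1 : sqnorm d < eta / 4 := Rlt_le_trans _ _ _ Hd (Rmin_l _ _).
have Hd2 : sqnorm d < eta * eta / (16 * (s + 1)) := Rlt_le_trans _ _ _ Hd (Rmin_r _ _).
have Hcs := cauchy_schwarz e d; rewrite -/s in Hcs.
have Hd0 := sqnorm_ge0 d.
(* |<e,d>|^2 <= s |d|^2 < eta^2 / 16, hence |<e,d>| < eta / 4 *)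
have Hsd : s * sqnorm d <= (s + 1) * (eta * eta / (16 * (s + 1))).
  apply: Rmult_le_compat; nra.
have Hid : inner e d * inner e d < eta * eta / 16.
  have -> : eta * eta / 16 = (s + 1) * (eta * eta / (16 * (s + 1))) by field; lra.
  have : 0 < (s + 1) * (eta * eta / (16 * (s + 1)) - sqnorm d) by apply: Rmult_lt_0_compat; lra.
  nra.
rewrite sqnorm_add -/s; nra.
Qed.

Lemma regular_normal_subdiff n (f : vec n -> ereal) (u g : vec n) fu :
  f u = EFin fu -> reg_normal_cone (epi f) (vcat u (sca fu)) (vcat g (sca (-1))) ->
  subdiff f u g.
Proof.
move=> Hfu Hreg; exists fu; split => //.
exists (fun _ => vcat u (sca fu)), (fun _ => vcat g (sca (-1))).
split; first by move=> k; rewrite /epi vfst_vcat vsnd_vcat Hfu /sca /=; lra.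
by split; [exact: vcv_const | split; [exact: vcv_const | move=> k]].
Qed.

Lemma fermat_rule n (f : vec n -> ereal) (h : vec n -> R) (u g : vec n) (fu r C : R) :
  (forall x, f x <> EMInf) -> f u = EFin fu -> 0 < r ->
  (forall y fy, sqnorm (vsub y u) < r -> f y = EFin fy -> fu + h u <= fy + h y) ->
  (forall y, sqnorm (vsub y u) < r -> h y + inner g (vsub y u) <= h u + C * sqnorm (vsub y u)) ->
  subdiff f u g.
Proof.
move=> Hfin Hfu Hr Hmin Hup.
apply: (regular_normal_subdiff Hfu) => V [t [v [Ht [_ [Ht0 [Hv Hepi]]]]]].
rewrite inner_split !vfst_vcat !vsnd_vcat inner_1 /sca.
pose d k := vfst (v k); pose b k := vsnd (v k) ord0.
have Hd : vcv d (vfst V) := vcv_fst Hv.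
have Hb : Un_cv b (vsnd V ord0) := vcv_coord (vcv_snd Hv) ord0.
(* the step t_k d_k is eventually inside the neighbourhood of radius r *)
have Hstep : Un_cv (fun k => t k * t k * sqnorm (d k)) (0 * 0 * sqnorm (vfst V)).
  by apply: CV_mult; [exact: CV_mult | exact: sqnorm_cv].
rewrite Rmult_0_l Rmult_0_l in Hstep.
have Hineq : exists N, forall k, (N <= k)%coq_nat ->
    inner g (d k) + -1 * b k <= C * (t k * sqnorm (d k)).
  have [N HN] := Hstep r Hr; exists N => k Hk.
  set y := vadd u (vscale (t k) (d k)).
  have Hyu : vsub y u = vscale (t k) (d k).
    by apply: functional_extensionality => i; rewrite /y /vsub /vadd /vscale; ring.
  have Hnear : sqnorm (vsub y u) < r.
    have := HN k Hk; rewrite /R_dist Rminus_0_r Hyu sqnorm_scale => Habs.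
    exact: Rle_lt_trans (Rle_abs _) Habs.
  have Hfy : ele (f y) (EFin (fu + t k * b k)).
    have := Hepi k; rewrite /epi.
    have -> : vfst (vadd (vcat u (sca fu)) (vscale (t k) (v k))) = y.
      by apply: functional_extensionality => j; rewrite /y /vfst /vadd /vscale vcat_l.
    by rewrite /vsnd /vadd /vscale vcat_r.
  move: Hfy (Hfin y); case Efy: (f y) => [fy| |] //= Hfy _.
  have := Hmin y fy Hnear Efy; have := Hup y Hnear.
  rewrite Hyu inner_scale_r sqnorm_scale => H1 H2.
  have Htk := Ht k.
  apply: (Rmult_le_reg_l (t k)) => //; nra.
have Hlim : Un_cv (fun k => C * (t k * sqnorm (d k))) (C * (0 * sqnorm (vfst V))).
  by apply: CV_mult; [exact: cv_const | apply: CV_mult; [exact: Ht0 | exact: sqnorm_cv]].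
have := cv_le_eventually (CV_plus _ _ _ _ (inner_cv g Hd)
  (CV_mult _ _ _ _ (cv_const (-1)) Hb)) Hlim Hineq.
lra.
Qed.

(* The penalty used to localize a bad point x with a = |x - xb|^2:
     h(y) = -(k1/2) |y - xb|^2 + A (max(0, |y - xb|^2 - a))^2.
   It rewards distance from xb inside the ball of radius^2 a and punishes
   distance beyond it, which keeps the minimizer of f + h away from the
   boundary of the larger ball of radius^2 2a. *)
Definition penalty_profile (k1 A a s : R) : R :=
  - (k1 / 2) * s + A * (Rmax 0 (s - a) * Rmax 0 (s - a)).

Definition penalty n (k1 A a : R) (xb y : vec n) : R :=
  penalty_profile k1 A a (sqnorm (vsub y xb)).

Lemma Rmax0_cv (u : nat -> R) l : Un_cv u l -> Un_cv (fun k => Rmax 0 (u k)) (Rmax 0 l).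
Proof.
move=> H eps He; case: (H eps He) => N HN; exists N => k Hk.
have [h1 h2] := Rabs_def2 _ _ (HN k Hk).
apply: Rabs_def1; rewrite /Rmax; case: Rle_dec => H1; case: Rle_dec => H2; lra.
Qed.

Lemma penalty_cv n k1 A a (xb : vec n) (y : nat -> vec n) u :
  vcv y u -> Un_cv (fun k => penalty k1 A a xb (y k)) (penalty k1 A a xb u).
Proof.
move=> /(vcv_sub xb) /sqnorm_cv Hs.
have Hm := Rmax0_cv (CV_minus _ _ _ _ Hs (cv_const a)).
apply: CV_plus; first by apply: CV_mult => //; exact: cv_const.
by apply: CV_mult; [exact: cv_const | exact: CV_mult].
Qed.

Lemma Rmax0_sq_upper a s s' :
  Rmax 0 (s' - a) * Rmax 0 (s' - a) <=
  Rmax 0 (s - a) * Rmax 0 (s - a) + 2 * Rmax 0 (s - a) * (s' - s) + (s' - s) * (s' - s).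
Proof.
rewrite /Rmax; case: Rle_dec => H1; case: Rle_dec => H2.
- nra.
- have : (s' - a) * (s' - a) <= (s' - s) * (s' - s) by apply: Rmult_le_compat; lra.
  lra.
- have : 0 <= (s' - a) * (s' - a) by nra.
  lra.
- have := Rle_0_sqr (s' - s); rewrite /Rsqr; lra.
Qed.

Lemma penalty_upper n k1 A a (xb u : vec n) r : 0 <= A -> 0 <= r ->
  exists C, forall y, sqnorm (vsub y u) < r ->
    penalty k1 A a xb y +
      inner (vscale (k1 - 4 * A * Rmax 0 (sqnorm (vsub u xb) - a)) (vsub u xb)) (vsub y u)
    <= penalty k1 A a xb u + C * sqnorm (vsub y u).
Proof.
move=> HA Hr; set e := vsub u xb; set s := sqnorm e; set P := Rmax 0 (s - a).
have HP : 0 <= P by apply: Rmax_l.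
exists (Rabs k1 / 2 + 2 * A * P + A * (8 * s + 2 * r)) => y Hy.
set d := vsub y u; rewrite -/d in Hy.
have Hyx : vsub y xb = vadd e d.
  by apply: functional_extensionality => i; rewrite /e /d /vsub /vadd; ring.
set D := 2 * inner e d + sqnorm d.
have Hs' : sqnorm (vsub y xb) = s + D by rewrite Hyx sqnorm_add /D /s; ring.
rewrite /penalty Hs' /penalty_profile -/e -/s -/P inner_scale_l.
have Hmax := Rmax0_sq_upper a s (s + D); rewrite -/P in Hmax.
have HAmax := Rmult_le_compat_l _ _ _ HA Hmax.
(* D^2 <= 8 <e,d>^2 + 2 |d|^4 <= (8 s + 2 r) |d|^2 by Cauchy-Schwarz *)
have Hcs := cauchy_schwarz e d; rewrite -/s in Hcs.
have Hd0 := sqnorm_ge0 d; have Hs0 := sqnorm_ge0 e; rewrite -/s in Hs0.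
have HD : D * D <= (8 * s + 2 * r) * sqnorm d.
  have Hsq : D * D <= 8 * (inner e d * inner e d) + 2 * (sqnorm d * sqnorm d).
    by have := Rle_0_sqr (2 * inner e d - sqnorm d); rewrite /Rsqr /D; lra.
  have Hdr : sqnorm d * sqnorm d <= r * sqnorm d by apply: Rmult_le_compat_r; lra.
  lra.
have HAD := Rmult_le_compat_l _ _ _ HA HD.
have Hk1 : - (k1 / 2) * sqnorm d <= Rabs k1 / 2 * sqnorm d.
  by apply: Rmult_le_compat_r => //; have := Rle_abs (- k1); rewrite Rabs_Ropp; lra.
have HAP : 0 <= A * P * sqnorm d by apply: Rmult_le_pos => //; apply: Rmult_le_pos.
have ED : s + D - s = D by ring.
rewrite ED in HAmax; rewrite /D in HAmax HAD *; nra.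
Qed.

(* With A a = 2 L + k1 + 1, a
   squared distance s in [0, 2a] at which the minorant bound
   -L s + profile(s) < (kappa - k1) a / 2 holds is neither 0 (too little
   reward) nor 2a (too much penalty). *)
Lemma penalty_profile_interior kappa k1 L A a s :
  kappa < k1 -> 0 <= L -> 0 < a -> A * a = 2 * L + k1 + 1 -> 0 <= s <= 2 * a ->
  - L * s + penalty_profile k1 A a s < (kappa - k1) / 2 * a -> 0 < s < 2 * a.
Proof.
move=> Hk HL Ha HAa [Hs0 Hs2]; rewrite /penalty_profile => Hlt; split.
- case: (Rle_lt_or_eq_dec _ _ Hs0) => // Hs.
  move: Hlt; rewrite -Hs /Rmax; case: Rle_dec => ?; nra.
- case: (Rle_lt_or_eq_dec _ _ Hs2) => // Hs.
  move: Hlt; rewrite Hs /Rmax; case: Rle_dec => ?; last lra.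
  have -> : A * ((2 * a - a) * (2 * a - a)) = (A * a) * a by ring.
  rewrite HAa; nra.
Qed.

Lemma prox_quadratic_minorant n (f : vec n -> ereal) (xb : vec n) fb :
  f xb = EFin fb -> prox_subdiff f xb (@vzero n) ->
  exists L d2, 0 <= L /\ 0 < d2 /\ forall y fy, sqnorm (vsub y xb) < d2 ->
    f y = EFin fy -> fb - L * sqnorm (vsub y xb) <= fy.
Proof.
move=> Hfb [_ [M [d [Hd Hprox]]]].
exists (Rabs M), (d * d); split; first exact: Rabs_pos.
split; first nra.
move=> y fy Hy Hfy.
have [Hs|Hs] := Rle_lt_or_eq_dec _ _ (sqnorm_ge0 (vsub y xb)).
- have Hn : 0 < vnorm (vsub y xb) < d.
    split; first exact: sqrt_lt_R0.
    rewrite -(sqrt_square d); last lra.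
    by apply: sqrt_lt_1_alt; split; [exact: sqnorm_ge0 | exact: Hy].
  have := Hprox y Hn; rewrite Hfb Hfy inner_zero_l vnorm_sq /= => Hle.
  have : - Rabs M * sqnorm (vsub y xb) <= M * sqnorm (vsub y xb).
    apply: Rmult_le_compat_r; first lra.
    by have := Rle_abs (- M); rewrite Rabs_Ropp; lra.
  lra.
- rewrite -Hs; move: Hfy; rewrite (sqnorm_sub_eq0 (esym Hs)) Hfb => -[->]; lra.
Qed.

Lemma penalized_minimizer n (f : vec n -> ereal) (xb x : vec n) fb fx L d2 kappa k1 a A :
  (forall y, f y <> EMInf) -> lsc f -> 0 <= L -> 0 < kappa < k1 ->
  (forall y fy, sqnorm (vsub y xb) < d2 -> f y = EFin fy -> fb - L * sqnorm (vsub y xb) <= fy) ->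
  f x = EFin fx -> sqnorm (vsub x xb) = a -> 0 < a -> 2 * a < d2 ->
  fx < fb + kappa / 2 * a -> A * a = 2 * L + k1 + 1 ->
  exists u fu, f u = EFin fu /\ (0 < sqnorm (vsub u xb) < 2 * a) /\
    forall y fy, sqnorm (vsub y xb) <= 2 * a -> f y = EFin fy ->
      fu + penalty k1 A a xb u <= fy + penalty k1 A a xb y.
Proof.
move=> Hfin Hlsc HL [Hka Hk1] Hminor Hfx Ea Ha Had Hbad HAa.
have HA : 0 <= A.
  by apply: (Rmult_le_reg_r a) => //; rewrite HAa Rmult_0_l; lra.
have Hbound : forall y fy, sqnorm (vsub y xb) <= 2 * a -> f y = EFin fy ->
    fb - (L + k1 / 2) * (2 * a) <= fy + penalty k1 A a xb y.
  move=> y fy Hy Hfy.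
  have := Hminor y fy ltac:(lra) Hfy; have := sqnorm_ge0 (vsub y xb).
  have : 0 <= A * (Rmax 0 (sqnorm (vsub y xb) - a) * Rmax 0 (sqnorm (vsub y xb) - a)).
    by apply: Rmult_le_pos => //; apply: Rle_0_sqr.
  rewrite /penalty /penalty_profile => h1 h2 h3; nra.
have Hx : exists y fy, sqnorm (vsub y xb) <= 2 * a /\ f y = EFin fy.
  by exists x, fx; split; [lra | exact: Hfx].
have [u [fu [Hsu [Hfu Hmin]]]] :=
  weierstrass_min Hfin Hlsc (@penalty_cv n k1 A a xb) Hbound Hx.
exists u, fu; split => //; split => //.
apply: (penalty_profile_interior Hk1 HL Ha HAa); first by split => //; exact: sqnorm_ge0.
(* compare the values at u and at x, using the minorant at u *)
have Hux := Hmin x fx ltac:(lra) Hfx.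
have Hhx : penalty k1 A a xb x = - (k1 / 2) * a.
  by rewrite /penalty /penalty_profile Ea Rminus_diag_eq // /Rmax; case: Rle_dec => _; ring.
have Hlow := Hminor u fu ltac:(lra) Hfu.
rewrite Hhx /penalty in Hux; lra.
Qed.

Lemma bad_point_subgradient n (f : vec n -> ereal) (xb x : vec n) fb fx L d2 kappa k1 :
  (forall y, f y <> EMInf) -> lsc f -> 0 <= L -> 0 < kappa < k1 ->
  (forall y fy, sqnorm (vsub y xb) < d2 -> f y = EFin fy -> fb - L * sqnorm (vsub y xb) <= fy) ->
  f x = EFin fx -> 0 < sqnorm (vsub x xb) -> 2 * sqnorm (vsub x xb) < d2 ->
  fx < fb + kappa / 2 * sqnorm (vsub x xb) ->
  exists u lam, 0 < sqnorm (vsub u xb) < 2 * sqnorm (vsub x xb) /\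
    k1 - 4 * (2 * L + k1 + 1) <= lam <= k1 /\ subdiff f u (vscale lam (vsub u xb)).
Proof.
move=> Hfin Hlsc HL Hk Hminor Hfx Ha Had Hbad.
set a := sqnorm (vsub x xb) in Ha Had Hbad *.
set A := (2 * L + k1 + 1) / a.
have HAa : A * a = 2 * L + k1 + 1 by rewrite /A; field; lra.
have HA : 0 <= A by apply: Rlt_le; apply: Rdiv_lt_0_compat; lra.
have [u [fu [Hfu [Hsu Hmin]]]] :=
  penalized_minimizer Hfin Hlsc HL Hk Hminor Hfx erefl Ha Had Hbad HAa.
rewrite -/a in Hsu Hmin; set e := vsub u xb in Hsu *; set P := Rmax 0 (sqnorm e - a).
have HP : 0 <= P <= a by rewrite /P /Rmax; case: Rle_dec => ?; lra.
have [r [Hr Hball]] := @sqnorm_add_small n e (2 * a - sqnorm e) ltac:(lra).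
have [C HC] := @penalty_upper n k1 A a xb u r HA (Rlt_le _ _ Hr).
exists u, (k1 - 4 * A * P); split => //; split.
  have : A * P <= A * a by apply: Rmult_le_compat_l; lra.
  have : 0 <= A * P by apply: Rmult_le_pos; lra.
  move=> ? ?; lra.
(* the r-neighbourhood of u lies in the ball, where u minimizes f + penalty *)
apply: (fermat_rule Hfin Hfu Hr _ HC) => y fy Hy Hfy.
apply: Hmin Hfy; apply: Rlt_le.
have -> : vsub y xb = vadd e (vsub y u).
  by apply: functional_extensionality => i; rewrite /e /vsub /vadd; ring.
have := Hball _ Hy; lra.
Qed.

Lemma growth_failure_points n (f : vec n -> ereal) (xb : vec n) fb kappa :
  (forall y, f y <> EMInf) -> f xb = EFin fb -> 0 < kappa ->
  ~ strong_local_min f xb kappa ->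
  forall gam, 0 < gam -> exists x fx, vnorm (vsub x xb) <= gam /\ f x = EFin fx /\
    0 < sqnorm (vsub x xb) /\ fx < fb + kappa / 2 * sqnorm (vsub x xb).
Proof.
move=> Hfin Hfb Hka Hno gam Hgam; apply: NNPP => Hall; apply: Hno.
split => //; split; first by exists fb.
exists gam; split => // x Hx; apply: NNPP => Hbad; apply: Hall.
move: Hbad (Hfin x); rewrite Hfb vnorm_sq; case Efx: (f x) => [fx| |] //= Hbad _.
exists x, fx; split => //; split => //; split; last lra.
have [//|Hs] := Rle_lt_or_eq_dec _ _ (sqnorm_ge0 (vsub x xb)).
by move: Efx Hbad; rewrite -Hs (sqnorm_sub_eq0 (esym Hs)) Hfb => -[->]; lra.
Qed.

Lemma radial_subgradients_near n (f : vec n -> ereal) (xb : vec n) fb kappa k1 :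
  (forall y, f y <> EMInf) -> lsc f -> f xb = EFin fb -> prox_subdiff f xb (@vzero n) ->
  0 < kappa < k1 -> ~ strong_local_min f xb kappa ->
  exists lo, forall g, 0 < g -> exists u lam, 0 < vnorm (vsub u xb) < g /\
    lo <= lam <= k1 /\ subdiff f u (vscale lam (vsub u xb)).
Proof.
move=> Hfin Hlsc Hfb Hprox [Hka Hk1] Hno.
have [L [d2 [HL [Hd2 Hminor]]]] := prox_quadratic_minorant Hfb Hprox.
exists (k1 - 4 * (2 * L + k1 + 1)) => g Hg.
set m := Rmin (g * g) d2.
have Hm : 0 < m by apply: Rmin_glb_lt => //; nra.
have [x [fx [Hx [Hfx [Ha Hbad]]]]] :=
  growth_failure_points Hfin Hfb Hka Hno (sqrt_lt_R0 (m / 4) ltac:(lra)).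
have Hxa : sqnorm (vsub x xb) <= m / 4.
  rewrite -vnorm_sq -(pow2_sqrt (m / 4)); last lra.
  by apply: pow_incr; split => //; exact: vnorm_ge0.
have Hmg : m <= g * g := Rmin_l _ _.
have Hmd : m <= d2 := Rmin_r _ _.
have [u [lam [[Hu0 Hu1] Hsub]]] :=
  bad_point_subgradient Hfin Hlsc HL (conj Hka Hk1) Hminor Hfx Ha ltac:(lra) Hbad.
exists u, lam; split => //.
change (0 < sqrt (sqnorm (vsub u xb)) < g); split; first exact: sqrt_lt_R0.
rewrite -(sqrt_square g); last lra.
by apply: sqrt_lt_1_alt; split; [exact: sqnorm_ge0 | lra].
Qed.

Lemma decreasing_selection (T : Type) (rho : T -> R) (P : T -> Prop) :
  (forall g, 0 < g -> exists x, 0 < rho x < g /\ P x) ->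
  exists x : nat -> T, (forall k, 0 < rho (x k) /\ P (x k)) /\
    Un_decreasing (fun k => rho (x k)) /\ Un_cv (fun k => rho (x k)) 0.
Proof.
move=> H.
have [x1 Hx1] := H 1 Rlt_0_1.
have [pick Hpick] : exists pick : R -> T, forall g, 0 < g -> 0 < rho (pick g) < g /\ P (pick g).
  apply: (functional_choice (fun g x => 0 < g -> 0 < rho x < g /\ P x)) => g.
  by case: (Rlt_dec 0 g) => Hg; [have [x Hx] := H g Hg; exists x | exists x1].
pose x := fix x k := match k with
  | 0%nat => pick 1
  | S k' => pick (Rmin (rho (x k')) (/ INR (S k))) end.
have Hx : forall k, (0 < rho (x k) < / INR (S k) /\ P (x k)).
  elim => [|k [[H0 H1] _]]; first by rewrite /= Rinv_1; apply: Hpick; lra.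
  have [[H2 H3] H4] := Hpick (Rmin (rho (x k)) (/ INR (S (S k))))
    (Rmin_glb_lt _ _ _ H0 (inv_succ_pos (S k))).
  by split => //; split => //; apply: Rlt_le_trans H3 (Rmin_r _ _).
exists x; split; first by move=> k; have [[? _] ?] := Hx k.
split.
  move=> k; have [[_ H3] _] := Hpick (Rmin (rho (x k)) (/ INR (S (S k))))
    (Rmin_glb_lt _ _ _ (proj1 (proj1 (Hx k))) (inv_succ_pos (S k))).
  exact: Rlt_le (Rlt_le_trans _ _ _ H3 (Rmin_l _ _)).
move=> eps Heps; have [N HN] := inv_succ_small Heps; exists N => k Hk.
have [[H0 H1] _] := Hx k.
rewrite /R_dist Rminus_0_r Rabs_right; last lra.
exact: Rlt_trans H1 (HN k Hk).
Qed.

Lemma radial_graph_point n (xb u : vec n) (t l : R) : t <> 0 ->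
  let w := vscale (/ t) (vsub u xb) in
  vadd (vcat xb (@vzero n)) (vscale t (vcat w (vscale l w))) = vcat u (vscale l (vsub u xb)).
Proof.
move=> Ht w; apply: functional_extensionality => j.
rewrite /w /vadd /vscale /vcat /vsub /vzero; case: (split j) => i; field => //.
Qed.

(* Rescaling by t_k and extracting convergent
   subsequences of the unit directions w_k and of lambda_k gives a unit w and
   lambda <= hi with lambda w in D(df)(xb|0)(w). *)
Lemma radial_subgradient_tangent n (f : vec n -> ereal) (xb : vec n)
    (u : nat -> vec n) (lam : nat -> R) lo hi :
  let t k := vnorm (vsub (u k) xb) in
  (forall k, 0 < t k) -> Un_decreasing t -> Un_cv t 0 ->
  (forall k, lo <= lam k <= hi) ->
  (forall k, subdiff f (u k) (vscale (lam k) (vsub (u k) xb))) ->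
  exists w l, sqnorm w = 1 /\ l <= hi /\ gderiv_subdiff f xb (@vzero n) w (vscale l w).
Proof.
move=> t Ht Hdec Ht0 Hlam Hsub.
pose w k := vscale (/ t k) (vsub (u k) xb).
have Hw1 : forall k, sqnorm (w k) = 1.
  move=> k; rewrite /w sqnorm_scale -vnorm_sq -/(t k).
  by have := Ht k; move=> ?; field; lra.
have Hwb : forall k, vnorm (w k) <= 1 by move=> k; rewrite /vnorm -/(sqnorm _) Hw1 sqrt_1; lra.
have [phi [wl [Hphi Hwl]]] := bolzano_weierstrass_vec Hwb.
have [psi [ll [Hpsi Hll]]] := @bolzano_weierstrass_seq (fun k => lam (phi k))
  (Rabs lo + Rabs hi) (fun k => ltac:(have := Hlam (phi k); split_Rabs; lra)).
pose chi k := phi (psi k).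
have Hchi : incr chi := incr_comp Hphi Hpsi.
have Hw : vcv (fun k => w (chi k)) wl.
  apply: coord_vcv => i.
  exact: (cv_subseq (u := fun k => w (phi k) i)) (vcv_coord Hwl i) Hpsi.
exists wl, ll; split.
  apply: (UL_sequence (fun k => sqnorm (w (chi k)))); first exact: sqnorm_cv.
  by apply: (Un_cv_ext (u := fun _ => 1)) (cv_const 1) => k; rewrite Hw1.
split.
  apply: (Rle_cv_lim (Vn := fun _ => hi)) Hll (cv_const hi).
  by move=> k; have [] := Hlam (phi (psi k)).
exists (fun k => t (chi k)), (fun k => vcat (w (chi k)) (vscale (lam (chi k)) (w (chi k)))).
split; first by move=> k; exact: Ht.
split; first exact: decreasing_subseq.
split; first exact: cv_subseq.
split.
  apply: coord_vcv => j; rewrite /vcat; case: (split j) => i.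
  - exact: vcv_coord Hw i.
  - exact: CV_mult _ _ _ _ Hll (vcv_coord Hw i).
move=> k; rewrite /gph_subdiff radial_graph_point; last exact: Rgt_not_eq (Ht _).
by rewrite vfst_vcat vsnd_vcat.
Qed.

(* Otherwise the
   radial subgradients produced near xb blow up to a unit direction w with
   lambda w in D(df)(xb|0)(w) and lambda <= k1 < c, contradicting
   c |w|^2 <= <lambda w, w> = lambda. *)
Lemma strong_min_of_curvature n (f : vec n -> ereal) (xb : vec n) (c : R) :
  Defs.proper f -> lsc f -> in_dom f xb -> prox_subdiff f xb (@vzero n) ->
  (forall w z, dom_gderiv_subdiff f xb (@vzero n) w ->
     gderiv_subdiff f xb (@vzero n) w z -> c * (vnorm w)^2 <= inner z w) ->
  forall kappa, 0 < kappa < c -> strong_local_min f xb kappa.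
Proof.
move=> [Hfin _] Hlsc [fb Hfb] Hprox Hcurv kappa [Hka Hkc]; apply: NNPP => Hno.
set k1 := (kappa + c) / 2.
have [lo Hnear] := radial_subgradients_near Hfin Hlsc Hfb Hprox
  (conj Hka (ltac:(rewrite /k1; lra) : kappa < k1)) Hno.
have [x [Hx [Hdec Hcv]]] := @decreasing_selection _ (fun p => vnorm (vsub p.1 xb))
  (fun p => lo <= p.2 <= k1 /\ subdiff f p.1 (vscale p.2 (vsub p.1 xb)))
  (fun g Hg => ltac:(have [u [l [? ?]]] := Hnear g Hg; by exists (u, l))).
have [w [l [Hw [Hl Htan]]]] := @radial_subgradient_tangent n f xb
  (fun k => (x k).1) (fun k => (x k).2) lo k1
  (fun k => proj1 (Hx k)) Hdec Hcv (fun k => proj1 (proj2 (Hx k))) (fun k => proj2 (proj2 (Hx k))).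
have := Hcurv w (vscale l w) (ex_intro _ _ Htan) Htan.
rewrite vnorm_sq inner_scale_l -/(sqnorm w) Hw /k1 in Hl * => ?; lra.
Qed.

Lemma curvature_bound_iff n (f : vec n -> ereal) (xb : vec n) (c : R) :
  (forall w z, dom_gderiv_subdiff f xb (@vzero n) w ->
     gderiv_subdiff f xb (@vzero n) w z -> c * (vnorm w)^2 <= inner z w) <->
  (forall e, curv_set f xb e -> ele (EFin c) e).
Proof.
split.
- move=> Hcurv e [w [z [Hdom [Hg ->]]]]; rewrite /quot; case: Req_dec_T => Hw //=.
  have Hpos : 0 < vnorm w ^ 2 by apply: pow_lt; have := vnorm_ge0 w; lra.
  apply: (Rmult_le_reg_r _ _ _ Hpos).
  have -> : inner z w / vnorm w ^ 2 * vnorm w ^ 2 = inner z w by field; lra.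
  exact: Hcurv.
- move=> Hlb w z Hdom Hg.
  have := Hlb (quot z w) (ex_intro _ w (ex_intro _ z (conj Hdom (conj Hg erefl)))).
  rewrite /quot; case: Req_dec_T => Hw /= Hle.
  + have Hw0 : w = @vzero n by apply: sqnorm_eq0; rewrite -vnorm_sq Hw; ring.
    by rewrite Hw Hw0 inner_sym inner_zero_l; lra.
  + have Hpos : 0 < vnorm w ^ 2 by apply: pow_lt; have := vnorm_ge0 w; lra.
    have := Rmult_le_compat_r _ _ _ (Rlt_le _ _ Hpos) Hle.
    by have -> : inner z w / vnorm w ^ 2 * vnorm w ^ 2 = inner z w by field; lra.
Qed.

Lemma ereal_below (r : R) (m : ereal) : elt (EFin r) m -> exists c', r < c' /\ ele (EFin c') m.
Proof.
case: m => [mu| |] [] //= Hle Hne.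
- exists mu; split; last exact: Rle_refl.
  by case: (Rle_lt_or_eq_dec _ _ Hle) => // Heq; case: Hne; rewrite Heq.
- by exists (r + 1); split; [lra|].
Qed.

Lemma ereal_le_of_lower (m q : ereal) (c : R) : 0 < c -> ele (EFin c) m ->
  (forall r, 0 < r -> elt (EFin r) m -> ele (EFin r) q) -> ele m q.
Proof.
move=> Hc Hcm H; case: m Hcm H => [mu| |] //= Hcm H.
- have below : forall r, 0 < r < mu -> ele (EFin r) q.
    by move=> r [Hr Hrm]; apply: H => //; split; [simpl; lra | case; lra].
  case: q {H} below => [q| |] //= below.
  + apply: Rnot_lt_le => Hlt.
    have Hmax : Rmax q (mu / 2) < mu by rewrite /Rmax; case: Rle_dec => ?; lra.
    have := below ((Rmax q (mu / 2) + mu) / 2).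
    have := Rmax_l q (mu / 2); have := Rmax_r q (mu / 2).
    move=> ? ? /(_ ltac:(lra)) ?; lra.
  + by apply: (below (mu / 2)); lra.
- have Hpos : forall r, 0 < r -> elt (EFin r) EPInf by move=> r _; split.
  case: q H => [q| |] //= H.
  + have Hq : 0 < Rabs q + 1 by have := Rabs_pos q; lra.
    have := H _ Hq (Hpos _ Hq); have := Rle_abs q; move=> ? ?; lra.
  + exact: H 1 Rlt_0_1 (Hpos _ Rlt_0_1).
Qed.

(* For the
   second, let m be the infimum of the curvature quotients; m >= c > 0, and
   any r in (0, m) is below some lower bound c' of the quotients, so by the
   first assertion (with c') r is a quadratic growth modulus, whence r <= QG. *)
Theorem theorem3p2 (n : nat) (f : vec n -> ereal) (xb : vec n) (c : R) :
  Defs.proper f -> lsc f -> in_dom f xb ->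
  prox_subdiff f xb (@vzero n) ->
  0 < c ->
  (forall w z, dom_gderiv_subdiff f xb (@vzero n) w ->
     gderiv_subdiff f xb (@vzero n) w z ->
     c * (vnorm w)^2 <= inner z w) ->
  (forall kappa, 0 < kappa < c -> strong_local_min f xb kappa) /\
  (forall qg m, is_sup (QG_set f xb) qg -> is_inf (curv_set f xb) m -> ele m qg).
Proof.
move=> Hp Hl Hd Hpx Hc Hcurv.
split; first exact: strong_min_of_curvature.
move=> qg m [Hqg _] [Hm_lb Hm_glb].
have Hcm := Hm_glb _ ((curvature_bound_iff f xb c).1 Hcurv).
apply: (ereal_le_of_lower Hc Hcm) => r Hr Hrm.
have [c' [Hrc' Hc'm]] := ereal_below Hrm.
have Hcurv' := (curvature_bound_iff f xb c').2 (fun e He => ele_trans Hc'm (Hm_lb e He)).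
apply: Hqg; exists r; split => //; split => //.
exact: strong_min_of_curvature Hp Hl Hd Hpx Hcurv' r (conj Hr Hrc').
Qed.
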